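(* Let $G$ be a bus graph containing an $(A,B)$-perp with vertices $x,y,z,A,A',B,B',C$ as defined below, and let $\Gamma$ be any realization of $G$. Then (1) $\Gamma(B)$ and $\Gamma(B')$ are parallel; (2) $\Gamma(A)$ and $\Gamma(B)$ are perpendicular; (3) $\Gamma(A)$ and $\Gamma(A')$ are parallel.
   Context: A bus graph is a finite bipartite graph $G=(\mathcal{B},\mathcal{C};\mathcal{E})$ with $\deg(c)\le 4$ for all $c\in\mathcal{C}$. A realization $\Gamma$ of $G$ in the integer grid is a drawing such that: (1) each $B\in\mathcal{B}$ is drawn as a closed line segment $\Gamma(B)$ along a grid line (a ''bus''); (2) each $c\in\mathcal{C}$ is drawn as a grid point $\Gamma(c)$; (3) each edge $(B,c)\in\mathcal{E}$ is drawn as a closed line segment along a grid line between a point of $\Gamma(B)$ and $\Gamma(c)$, perpendicular to $\Gamma(B)$, containing no connectors or buses other than $\Gamma(B)$ and $\Gamma(c)$ (edges may cross other edges); (4) no two buses or connectors intersect. An $(A,B)$-perp is a bus graph component consisting of three distinct $\mathcal{C}$-vertices $x,y,z$, five distinct $\mathcal{B}$-vertices $A,A',B,B',C$, and the twelve edges $(A,x),(A',x),(B,x),(B',x)$, $(A,y),(A',y),(B,y),(C,y)$, $(A,z),(A',z),(B',z),(C,z)$. *)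

From mathcomp Require Import all_boot all_order all_algebra.
Set Implicit Arguments. Unset Strict Implicit. Unset Printing Implicit Defensive.
Import Order.TTheory GRing.Theory Num.Theory.
Local Open Scope ring_scope.

Definition bus_graph (Bv Cv : finType) (E : Bv -> Cv -> bool) : Prop :=
  forall c : Cv, (#|[pred b | E b c]| <= 4)%N.

Definition point := (int * int)%type.

(* A bus drawing: a closed segment along a grid line.  [horiz] = true means
   the segment lies on the horizontal line y = fixc, with x in [lo, hi];
   otherwise it lies on the vertical line x = fixc with y in [lo, hi]. *)
Record bus_draw := BusDraw { horiz : bool; fixc : int; lo : int; hi : int }.

Definition bus_valid (s : bus_draw) : bool := lo s <= hi s.

Definition on_bus (s : bus_draw) (p : point) : bool :=
  if horiz s then (p.2 == fixc s) && (lo s <= p.1 <= hi s)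
  else (p.1 == fixc s) && (lo s <= p.2 <= hi s).

(* The edge from bus s to connector point q: the segment perpendicular to s
   joining the foot point of q on the line of s to q. *)
Definition foot_in_bus (s : bus_draw) (q : point) : bool :=
  if horiz s then lo s <= q.1 <= hi s else lo s <= q.2 <= hi s.

Definition between (a b t : int) : bool := (Num.min a b <= t <= Num.max a b).

Definition on_edge (s : bus_draw) (q : point) (p : point) : bool :=
  if horiz s then (p.1 == q.1) && between (fixc s) q.2 p.2
  else (p.2 == q.2) && between (fixc s) q.1 p.1.

Definition realization (Bv Cv : finType) (E : Bv -> Cv -> bool)
  (GB : Bv -> bus_draw) (GC : Cv -> point) : Prop :=
  (forall b, bus_valid (GB b)) /\
  injective GC /\
  (forall b b', b != b' -> forall p, ~ (on_bus (GB b) p /\ on_bus (GB b') p)) /\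
  (forall b c, ~~ on_bus (GB b) (GC c)) /\
  (forall b c, E b c ->
     [/\ foot_in_bus (GB b) (GC c),
         (forall c', c' != c -> ~~ on_edge (GB b) (GC c) (GC c')) &
         (forall b', b' != b -> forall p,
             ~ (on_edge (GB b) (GC c) p /\ on_bus (GB b') p))]).

Definition perp_edges (Bv Cv : finType) (x y z : Cv) (A A' B B' C : Bv)
  : seq (Bv * Cv) :=
  [:: (A, x); (A', x); (B, x); (B', x);
      (A, y); (A', y); (B, y); (C, y);
      (A, z); (A', z); (B', z); (C, z)].

Definition is_perp (Bv Cv : finType) (E : Bv -> Cv -> bool)
  (x y z : Cv) (A A' B B' C : Bv) : Prop :=
  uniq [:: x; y; z] /\ uniq [:: A; A'; B; B'; C] /\
  (* the component: every edge incident to one of these vertices is one of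
     the twelve listed edges, and all twelve are edges *)
  (forall b c, (b \in [:: A; A'; B; B'; C]) || (c \in [:: x; y; z]) ->
     (E b c <-> (b, c) \in perp_edges x y z A A' B B' C)).

From mathcomp Require Import all_boot all_order all_algebra zify.
Import Order.TTheory GRing.Theory Num.Theory.
Local Open Scope ring_scope.
Set Implicit Arguments. Unset Strict Implicit.

(* Two parallel buses attached to a common connector lie on opposite sides of
   it: otherwise the edge from the farther bus runs through the point of the
   nearer bus facing the connector.  Three pairwise "opposite" lines cannot
   exist, so no connector has three parallel buses, and each of x, y, z, having
   four buses, sees exactly two horizontal ones.  Since y and z share A, A', C,
   this forces B and B' to have the same orientation, and then at x both A and
   A' take the other one. *)

Lemma opposite_of_not_between (a b q : int) :
  ~~ between a q b -> ~~ between b q a -> (a < q) != (b < q).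
Proof.
by rewrite /between /Num.min /Num.max; case: (ltP a q); case: (ltP b q); lia.
Qed.

Definition perp_coord (h : bool) (q : point) : int := if h then q.2 else q.1.

Section Realization.
Variables (Bv Cv : finType) (E : Bv -> Cv -> bool).
Variables (GB : Bv -> bus_draw) (GC : Cv -> point).
Hypothesis realE : realization E GB GC.

Local Notation h b := (horiz (GB b)).

Lemma parallel_neighbour_not_between b1 b2 c :
  E b1 c -> E b2 c -> b1 != b2 -> h b1 = h b2 ->
  ~~ between (fixc (GB b1)) (perp_coord (h b1) (GC c)) (fixc (GB b2)).
Proof.
move: realE => [_ [_ [_ [_ edgeP]]]] E1 E2 b12 h12; apply/negP => mid.
have [_ _ /(_ b2) avoid] := edgeP _ _ E1.
have [foot2 _ _] := edgeP _ _ E2.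
rewrite eq_sym in b12.
move: mid foot2; rewrite /perp_coord /foot_in_bus -h12.
case hb1: (h b1) => mid foot2.
- apply: (avoid b12 ((GC c).1, fixc (GB b2))).
  by rewrite /on_edge /on_bus hb1 -h12 hb1 /= !eqxx mid foot2.
- apply: (avoid b12 (fixc (GB b2), (GC c).2)).
  by rewrite /on_edge /on_bus hb1 -h12 hb1 /= !eqxx mid foot2.
Qed.

Lemma parallel_neighbours_opposite b1 b2 c :
  E b1 c -> E b2 c -> b1 != b2 -> h b1 = h b2 ->
  (fixc (GB b1) < perp_coord (h b1) (GC c))
    != (fixc (GB b2) < perp_coord (h b1) (GC c)).
Proof.
move=> E1 E2 b12 h12; apply: opposite_of_not_between.
  exact: parallel_neighbour_not_between.
by rewrite h12; apply: parallel_neighbour_not_between; rewrite // eq_sym.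
Qed.

Lemma no_three_parallel_neighbours b1 b2 b3 c :
  E b1 c -> E b2 c -> E b3 c -> uniq [:: b1; b2; b3] ->
  ~~ [&& h b1 == h b2 & h b2 == h b3].
Proof.
move=> E1 E2 E3; rewrite /= !inE !negb_or andbT.
move=> /andP [/andP [b12 b13] b23]; apply/negP => /andP [/eqP h12 /eqP h23].
have o12 := parallel_neighbours_opposite E1 E2 b12 h12.
have o13 := parallel_neighbours_opposite E1 E3 b13 (etrans h12 h23).
have o23 := parallel_neighbours_opposite E2 E3 b23 h23.
rewrite -h12 in o23.
by move: o12 o13 o23; do 3!case: (_ < _).
Qed.

Lemma four_neighbours_balanced b1 b2 b3 b4 c :
  all (E^~ c) [:: b1; b2; b3; b4] -> uniq [:: b1; b2; b3; b4] ->
  count (horiz \o GB) [:: b1; b2; b3; b4] = 2%N.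
Proof.
move=> /and5P [E1 E2 E3 E4 _] U.
have t123 := no_three_parallel_neighbours E1 E2 E3
  (mask_uniq U [:: true; true; true; false]).
have t124 := no_three_parallel_neighbours E1 E2 E4
  (mask_uniq U [:: true; true; false; true]).
have t134 := no_three_parallel_neighbours E1 E3 E4
  (mask_uniq U [:: true; false; true; true]).
have t234 := no_three_parallel_neighbours E2 E3 E4
  (mask_uniq U [:: false; true; true; true]).
move: t123 t124 t134 t234 => /=.
by case: (h b1); case: (h b2); case: (h b3); case: (h b4).
Qed.

End Realization.

Lemma perp_neighbours (Bv Cv : finType) (E : Bv -> Cv -> bool)
  (x y z : Cv) (A A' B B' C : Bv) :
  is_perp E x y z A A' B B' C ->
  [/\ all (E^~ x) [:: A; A'; B; B'], all (E^~ y) [:: A; A'; B; C]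
    & all (E^~ z) [:: A; A'; B'; C]].
Proof.
move=> [_ [_ edgeE]].
have edge c b : c \in [:: x; y; z] ->
    (b, c) \in perp_edges x y z A A' B B' C -> E b c.
  by move=> cN bc; apply/(edgeE b c); rewrite ?cN ?orbT.
split; apply/allP => b; rewrite !inE => /or4P [] /eqP ->;
  by apply: edge; rewrite !inE !eqxx ?orbT.
Qed.

Theorem lemma3 (Bv Cv : finType) (E : Bv -> Cv -> bool)
  (x y z : Cv) (A A' B B' C : Bv)
  (GB : Bv -> bus_draw) (GC : Cv -> point) :
  bus_graph E ->
  is_perp E x y z A A' B B' C ->
  realization E GB GC ->
  [/\ horiz (GB B) = horiz (GB B'),
      horiz (GB A) <> horiz (GB B) &
      horiz (GB A) = horiz (GB A')].
Proof.
move=> _ perp realE; have [_ [uB _]] := perp.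
have [Nx Ny Nz] := perp_neighbours perp.
have := four_neighbours_balanced realE Nx
  (mask_uniq uB [:: true; true; true; true; false]).
have := four_neighbours_balanced realE Ny
  (mask_uniq uB [:: true; true; true; false; true]).
have := four_neighbours_balanced realE Nz
  (mask_uniq uB [:: true; true; false; true; true]).
rewrite /=; case: (horiz (GB A)); case: (horiz (GB A'));
  by case: (horiz (GB B)); case: (horiz (GB B')); case: (horiz (GB C)).
Qed.
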